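(* Let $M\ge2$ be an integer and $k\ge2$ real. Suppose $0\le x_1\le\dots\le x_M$ and $\lambda_1,\dots,\lambda_M\ge0$ with $\sum_{i=1}^M\lambda_i=1$. Then $$\sum_{i=1}^M\lambda_ix_i^k-\Big(\sum_{i=1}^M\lambda_ix_i\Big)^k\le\frac18k(k-1)\,x_M^{k-2}(x_M-x_1)^2.$$ *)

From mathcomp Require Import all_boot all_order all_algebra.
From mathcomp Require Import all_classical all_reals all_analysis.

From mathcomp Require Import all_boot all_order all_algebra.
From mathcomp Require Import all_classical all_reals all_analysis.
From mathcomp Require Import ring lra zify.
Import Order.TTheory GRing.Theory Num.Theory numFieldNormedType.Exports.
Local Open Scope ring_scope.
Local Open Scope classical_set_scope.

(* On [0, b] the second derivative of s |-> s^k is at most k(k-1) b^(k-2), so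
   x^k <= m^k + k m^(k-1) (x - m) + k(k-1)/2 b^(k-2) (x - m)^2 for x, m in [0, b].
   Averaging at the weighted mean m kills the linear term and leaves
   k(k-1)/2 b^(k-2) times the weighted variance, which Popoviciu's inequality
   bounds by (x_M - x_1)^2 / 4. *)

Lemma nondecn_bounds {d} {T : preorderType d} {n : nat} {u : nat -> T} :
  (forall i, (i.+1 < n)%N -> (u i <= u i.+1)%O) ->
  forall i, (i < n)%N -> (u 0 <= u i <= u n.-1)%O.
Proof.
move=> u_step i i_lt.
have u_mono : {in gtn n &, {homo u : p q / (p <= q)%N >-> (p <= q)%O}}.
  apply: Order.NatMonotonyTheory.nondecn_inP => [p q _ q_lt r /andP[_ rq] | p _].
    exact: ltn_trans rq q_lt.
  exact: u_step.
by rewrite !u_mono ?inE //=; lia.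
Qed.

Lemma continuous_powR_ge0 {R : realType} (p : R) : 0 < p ->
  {within `[0, +oo[, continuous (@powR R ^~ p)}.
Proof.
move=> p_gt0; apply: derivable_oy_Rcontinuous_within_itvcy; split.
  exact: derivable_powR.
by rewrite powR0 ?gt_eqF //; exact: powR_cvg0.
Qed.

Lemma powR_sub_le {R : realType} {p b u v : R} :
  1 <= p -> 0 <= u -> u <= v -> v <= b ->
  v `^ p - u `^ p <= p * b `^ (p - 1) * (v - u).
Proof.
move=> p1 u0 uv vb.
have powR_deriv c : c \in `]u, v[%R ->
    is_derive c 1 (@powR R ^~ p) (p * c `^ (p - 1)).
  by rewrite in_itv /= => /andP[uc _]; apply: is_derive1_powR; exact: le_lt_trans uc.
have uv_ge0 : [set` `[u, v]%R] `<=` [set` `[0, +oo[%R].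
  by apply: subset_itv; rewrite bnd_simp.
have [c] := MVT_segment uv powR_deriv
  (continuous_subspaceW uv_ge0 (continuous_powR_ge0 p (lt_le_trans ltr01 p1))).
rewrite in_itv /= => /andP[uc cv] ->.
rewrite ler_wpM2r ?subr_ge0 // ler_wpM2l ?(le_trans ler01 p1) //.
by apply: ge0_ler_powR; rewrite ?nnegrE; lra.
Qed.

Section DeriveSign.
Context {R : realType} {f f' : R -> R} {a b m : R}.
Hypothesis f_cont : {within `[a, b], continuous f}.
Hypothesis f_deriv : forall s, s \in `]a, b[%R -> is_derive s 1 f (f' s).
Hypothesis f'_sign : forall s, s \in `]a, b[%R -> f' s * (s - m) <= 0.

Lemma derive_sign_max x : m \in `[a, b]%R -> x \in `[a, b]%R -> f x <= f m.
Proof.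
rewrite !in_itv /= => /andP[am mb] /andP[ax xb].
have mvt u v : a <= u -> u < v -> v <= b ->
    exists2 c, c \in `]a, b[%R /\ u < c < v & f v - f u = f' c * (v - u).
  move=> au uv vb.
  have sub : {subset `]u, v[%R <= `]a, b[%R}.
    by apply: subitvP; rewrite subitvE !bnd_simp au vb.
  have sub_cont : [set` `[u, v]%R] `<=` [set` `[a, b]%R].
    by apply: subset_itv; rewrite bnd_simp.
  have [c cuv E] := MVT uv (fun s hs => f_deriv s (sub s hs))
    (continuous_subspaceW sub_cont f_cont).
  by exists c => //; split; [exact: sub | move: cuv; rewrite in_itv].
have [xm|mx|->] := ltgtP x m; last by [].
- have [c [cab /andP[_ cm]] E] := mvt x m ax xm mb.
  have f'c : 0 <= f' c.
    by rewrite -(@nmulr_lle0 _ (c - m)) ?subr_lt0 //; exact: f'_sign.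
  by rewrite -subr_ge0 E mulr_ge0 // subr_ge0 ltW.
- have [c [cab /andP[mc _]] E] := mvt m x am mx xb.
  have f'c : f' c <= 0.
    by rewrite -(@pmulr_lle0 _ (c - m)) ?subr_gt0 //; exact: f'_sign.
  by rewrite -subr_le0 E mulr_le0_ge0 // subr_ge0 ltW.
Qed.

End DeriveSign.

Lemma powR_le_taylor2 {R : realType} {k b m x : R} : 2 <= k ->
  0 <= m <= b -> 0 <= x <= b ->
  x `^ k <= m `^ k + k * m `^ (k - 1) * (x - m)
                   + k * (k - 1) / 2 * b `^ (k - 2) * (x - m) ^+ 2.
Proof.
move=> k2 /andP[m0 mb] /andP[x0 xb].
have k_gt0 : 0 < k by lra.
set K := k * m `^ (k - 1); set D := k * (k - 1) / 2 * b `^ (k - 2).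
pose g := K *: (id - cst m) + D *: (id - cst m) ^+ 2 : R -> R.
pose g' s := K + D * (2 * (s - m)).
have g_deriv (s : R) : is_derive s 1 g (g' s).
  by apply: is_derive_eq; rewrite /g' !fctE /= expr1 subr0 !scaler1.
(* s^k is not twice derivable at 0, so instead of Taylor's theorem we show that
   the remainder f vanishes at m and increases before m, decreases after m. *)
pose f := (@powR R ^~ k) - g.
pose f' s := k * s `^ (k - 1) - g' s.
have f_cont : {within `[0, b], continuous f}.
  have b_ge0 : [set` `[0, b]%R] `<=` [set` `[0, +oo[%R] by apply: subset_itv.
  have powR_cont := continuous_subspaceW b_ge0 (continuous_powR_ge0 k k_gt0).
  have g_cont : {within `[0, b], continuous g}.
    by apply: derivable_within_continuous => s _; exact: ex_derive.
  by move=> s; apply: continuousB; [exact: powR_cont | exact: g_cont].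
have f_deriv (s : R) : s \in `]0, b[%R -> is_derive s 1 f (f' s).
  rewrite in_itv /= => /andP[s0 _].
  exact: is_deriveB (is_derive1_powR k s0) (g_deriv s).
have f'_sign (s : R) : s \in `]0, b[%R -> f' s * (s - m) <= 0.
  rewrite in_itv /= => /andP[s0 sb].
  have deriv_gap u v : 0 <= u -> u <= v -> v <= b ->
      k * v `^ (k - 1) - k * u `^ (k - 1) <= 2 * D * (v - u).
    move=> u0 uv vb; have k1 : 1 <= k - 1 by lra.
    have := powR_sub_le k1 u0 uv vb; rewrite (_ : k - 1 - 1 = k - 2); last by ring.
    by move=> h; have := ler_wpM2l (ltW k_gt0) h; rewrite /D; lra.
  rewrite /f' /g' /K; have [ms|sm] := leP m s.
    apply: mulr_le0_ge0; last by rewrite subr_ge0.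
    by have := deriv_gap m s m0 ms (ltW sb); lra.
  apply: mulr_ge0_le0; last by rewrite subr_le0 ltW.
  by have := deriv_gap s m (ltW s0) (ltW sm) mb; lra.
have := derive_sign_max f_cont f_deriv f'_sign x.
rewrite !in_itv /= m0 mb x0 xb => /(_ isT isT).
by rewrite /f /g !fctE /GRing.scale /=; lra.
Qed.

Section WeightedMean.
Context {R : realFieldType} {I : finType} {lam x : I -> R}.
Hypothesis lam_ge0 : forall i, 0 <= lam i.
Hypothesis lam_sum1 : \sum_i lam i = 1.
Local Notation mean := (\sum_i lam i * x i).

Lemma wmean_between {a b : R} : (forall i, a <= x i <= b) -> a <= mean <= b.
Proof.
move=> x_ab; rewrite -[a]mul1r -[b]mul1r -lam_sum1 !mulr_suml.
by apply/andP; split; apply: ler_sum => i _; apply: ler_wpM2l => //; case/andP: (x_ab i).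
Qed.

(* Popoviciu's inequality, via the Bhatia-Davis bound (mean - a) (b - mean). *)
Lemma wvariance_le {a b : R} : (forall i, a <= x i <= b) ->
  \sum_i lam i * (x i - mean) ^+ 2 <= (b - a) ^+ 2 / 4.
Proof.
move=> x_ab.
have var_spread : \sum_i lam i * (x i - mean) ^+ 2
    + \sum_i lam i * ((x i - a) * (b - x i)) = (mean - a) * (b - mean).
  rewrite -big_split /=.
  transitivity (\sum_i ((a + b - 2 * mean) * (lam i * x i)
                        + (mean ^+ 2 - a * b) * lam i)).
    by apply: eq_bigr => i _; ring.
  by rewrite big_split /= -!mulr_sumr lam_sum1; ring.
have spread_ge0 : 0 <= \sum_i lam i * ((x i - a) * (b - x i)).
  apply: sumr_ge0 => i _; have /andP[ax xb] := x_ab i.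
  by rewrite mulr_ge0 // mulr_ge0 // subr_ge0.
by have := sqr_ge0 (a + b - 2 * mean); nra.
Qed.

Lemma wmean_gap_le (f : R -> R) {K D a b : R} : 0 <= D ->
  (forall i, a <= x i <= b) ->
  (forall i, f (x i) <= f mean + K * (x i - mean) + D * (x i - mean) ^+ 2) ->
  \sum_i lam i * f (x i) - f mean <= D * ((b - a) ^+ 2 / 4).
Proof.
move=> D_ge0 x_ab f_le.
have sum_le : \sum_i lam i * f (x i)
    <= \sum_i lam i * (f mean + K * (x i - mean) + D * (x i - mean) ^+ 2).
  by apply: ler_sum => i _; exact: ler_wpM2l.
have sum_E : \sum_i lam i * (f mean + K * (x i - mean) + D * (x i - mean) ^+ 2)
    = f mean + D * \sum_i lam i * (x i - mean) ^+ 2.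
  transitivity (\sum_i ((f mean - K * mean) * lam i + K * (lam i * x i)
                        + D * (lam i * (x i - mean) ^+ 2))).
    by apply: eq_bigr => i _; ring.
  by rewrite !big_split /= -!mulr_sumr lam_sum1; ring.
by have := ler_wpM2l D_ge0 (wvariance_le x_ab); lra.
Qed.

End WeightedMean.

Theorem lemma4p3 (R : realType) (M : nat) (k : R) (x lam : nat -> R) :
  (2 <= M)%N -> 2 <= k ->
  0 <= x 0%N ->
  (forall i, (i.+1 < M)%N -> x i <= x i.+1) ->
  (forall i, (i < M)%N -> 0 <= lam i) ->
  \sum_(i < M) lam i = 1 ->
  \sum_(i < M) lam i * (x i `^ k) - (\sum_(i < M) lam i * x i) `^ k
    <= 8^-1 * k * (k - 1) * (x M.-1 `^ (k - 2)) * (x M.-1 - x 0%N) ^+ 2.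
Proof.
move=> _ k2 x0_ge0 x_step lam_ge0 lam_sum1.
set a := x 0%N; set b := x M.-1; set m := \sum_(i < M) lam i * x i.
have x_ab (i : 'I_M) : a <= x i <= b := nondecn_bounds x_step i (ltn_ord i).
have x_0b (i : 'I_M) : 0 <= x i <= b.
  by case/andP: (x_ab i) => ax ->; rewrite (le_trans x0_ge0 ax).
have lam_ord_ge0 (i : 'I_M) : 0 <= lam i by exact: lam_ge0.
have m_0b : 0 <= m <= b := wmean_between lam_ord_ge0 lam_sum1 x_0b.
have D_ge0 : 0 <= k * (k - 1) / 2 * b `^ (k - 2).
  by rewrite mulr_ge0 ?powR_ge0 // divr_ge0 // mulr_ge0 //; lra.
have := wmean_gap_le lam_ord_ge0 lam_sum1 (@powR R ^~ k) D_ge0 x_ab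
  (fun i => powR_le_taylor2 k2 m_0b (x_0b i)).
suff -> : 8^-1 * k * (k - 1) * b `^ (k - 2) * (b - a) ^+ 2
    = k * (k - 1) / 2 * b `^ (k - 2) * ((b - a) ^+ 2 / 4) by [].
by field.
Qed.
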